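(* Let $L$ be a finite lattice, $C$ a nonempty convex subset of $L$, and $L[C]$ the doubling. For $a\in I_L(C)$, the element $(a,0)\in L[C]$ is left modular in $L[C]$ if and only if $a$ is left modular in $L$ and $a$ is below every maximal element of $C$. For $a\in (L\setminus I_L(C))\cup C$, the element $(a,1)\in L[C]$ is left modular in $L[C]$ if and only if $a$ is left modular in $L$ and $a$ is above every minimal element of $C$. Consequently, for $a\in C$, both $(a,0)$ and $(a,1)$ are left modular in $L[C]$ if and only if $a$ is left modular in $L$ and $a\in H(C)$.
   Context: A subset $C$ is convex if $x,y\in C$ implies $[x,y]\subseteq C$. $I_L(C)=\{y\in L\mid\exists x\in C,\ y\le x\}$. The doubling $L[C]$ is the subposet of $L\times\{0<1\}$ (product order) on $\big(I_L(C)\times\{0\}\big)\sqcup\big(((L\setminus I_L(C))\cup C)\times\{1\}\big)$; it is a lattice. The heart $H(C)$ is the set of elements of $C$ below all maximal elements of $C$ and above all minimal elements of $C$. An element $a$ of a lattice is left modular if for all $b<c$ one has $(b\vee a)\wedge c=b\vee(a\wedge c)$. *)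

From HB Require Import structures.
From mathcomp Require Import all_boot all_order.
Set Implicit Arguments. Unset Strict Implicit. Unset Printing Implicit Defensive.
Import Order.TTheory.
Local Open Scope order_scope.

Section Doubling.
Context {disp : Order.disp_t} {L : finLatticeType disp}.

Definition convex (C : {set L}) : Prop :=
  forall x y z : L, x \in C -> y \in C -> x <= z -> z <= y -> z \in C.

Definition downset (C : {set L}) : {set L} :=
  [set y | [exists x in C, y <= x]].

Definition maximal_in (C : {set L}) (m : L) : Prop :=
  m \in C /\ forall y, y \in C -> m <= y -> y = m.
Definition minimal_in (C : {set L}) (m : L) : Prop :=
  m \in C /\ forall y, y \in C -> y <= m -> y = m.

Definition heart (C : {set L}) (x : L) : Prop :=
  x \in C /\ (forall m, maximal_in C m -> x <= m) /\
  (forall m, minimal_in C m -> m <= x).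

Definition left_modular (a : L) : Prop :=
  forall b c : L, b < c -> (b `|` a) `&` c = b `|` (a `&` c).

(* the carrier of the doubling L[C] as a subset of L x {0<1} (false = 0) *)
Definition in_dbl (C : {set L}) (p : L * bool) : bool :=
  if p.2 then (p.1 \notin downset C) || (p.1 \in C) else p.1 \in downset C.

Definition dle (p q : L * bool) : bool := (p.1 <= q.1) && (p.2 ==> q.2).
Definition dlt (p q : L * bool) : bool := dle p q && (p != q).

Definition is_join_dbl (C : {set L}) (x y z : L * bool) : Prop :=
  [/\ in_dbl C z, dle x z, dle y z &
      forall w, in_dbl C w -> dle x w -> dle y w -> dle z w].
Definition is_meet_dbl (C : {set L}) (x y z : L * bool) : Prop :=
  [/\ in_dbl C z, dle z x, dle z y &
      forall w, in_dbl C w -> dle w x -> dle w y -> dle w z].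

(* left modularity of a in the lattice L[C]: for all b < c in L[C],
   (b v a) ^ c = b v (a ^ c), with joins/meets taken in L[C]
   (they exist and are unique since L[C] is a lattice). *)
Definition left_modular_dbl (C : {set L}) (a : L * bool) : Prop :=
  forall b c : L * bool, in_dbl C b -> in_dbl C c -> dlt b c ->
  forall u v w z,
    is_join_dbl C b a u -> is_meet_dbl C u c v ->
    is_meet_dbl C a c w -> is_join_dbl C b w z -> v = z.

End Doubling.

(* Joins and meets of L[C] are those of L on the first coordinate, with the
   bit adjusted so that the result stays in L[C].  Hence left modularity of
   (a, e) in L[C] gives left modularity of a in L (through the order embedding
   of L into L[C]), and what remains is an identity between bits.  Testing it
   on the pair (m, 0) < (m, 1) for a maximal (resp. minimal) m of C shows
   that m \/ a (resp. m /\ a) is in C, hence a <= m (resp. m <= a).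
   Conversely, in the case analysis of the bit identity the only nontrivial
   case is x := b \/ (a /\ c) in C: a maximal element of C above x
   is above b \/ a, which therefore lies in I(C) (resp. a minimal element of C
   below x is below a /\ c, which therefore lies in C). *)

From mathcomp Require Import all_boot all_order.
Set Implicit Arguments. Unset Strict Implicit. Unset Printing Implicit Defensive.
Import Order.TTheory.
Local Open Scope order_scope.

Section Extremal.
Context {disp : Order.disp_t} {L : finLatticeType disp}.

Lemma card_lower_set_lt (x y : L) :
  x < y -> (#|[set z | (z <= x)%O]| < #|[set z | (z <= y)%O]|)%N.
Proof.
move=> xy; apply/proper_card/properP; split.
- by apply/subsetP => z; rewrite !inE => /le_trans; apply; apply: ltW.
- by exists y; rewrite !inE ?lexx // lt_geF.
Qed.

Lemma exists_maximal_above (C : {set L}) x :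
  x \in C -> exists2 m, maximal_in C m & x <= m.
Proof.
move=> xC.
have [m /andP[mC xm] mmax] := @arg_maxnP L x (fun y => (y \in C) && (x <= y))
  (fun y => #|[set z | (z <= y)%O]|) (introT andP (conj xC (lexx x))).
exists m => //; split => // y yC my; apply/eqP; rewrite eq_sym eq_le my /=.
apply: contraT => ym; have /card_lower_set_lt : m < y by rewrite lt_leAnge my ym.
have ym_card : (#|[set z | (z <= y)%O]| <= #|[set z | (z <= m)%O]|)%N.
  by apply: mmax; rewrite yC (le_trans xm my).
by rewrite ltnNge ym_card.
Qed.

End Extremal.

Lemma exists_minimal_below disp (L : finLatticeType disp) (C : {set L}) x :
  x \in C -> exists2 m, minimal_in C m & m <= x.
Proof. exact: (@exists_maximal_above _ L^d). Qed.

Section Doubling.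
Context {disp : Order.disp_t} {L : finLatticeType disp}.
Implicit Types (a b c m x y : L) (p q : L * bool).

Lemma dle_anti p q : dle p q -> dle q p -> p = q.
Proof.
case: p q => [x i] [y j] /andP[/= xy ij] /andP[/= yx ji].
by rewrite (le_anti (introT andP (conj xy yx))); case: i j ij ji => [] [].
Qed.

Lemma left_modular_le a b c :
  left_modular a -> b <= c -> (b `|` a) `&` c = b `|` (a `&` c).
Proof.
move=> lma; rewrite le_eqVlt => /predU1P[<-|]; last exact: lma.
by rewrite meetC joinKI meetKUC.
Qed.

Variable C : {set L}.

Lemma is_join_dbl_unique p q r r' :
  is_join_dbl C p q r -> is_join_dbl C p q r' -> r = r'.
Proof.
case=> ri pr qr rmin [r'i pr' qr' r'min].
by apply: dle_anti; [apply: rmin | apply: r'min].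
Qed.

Lemma is_meet_dbl_unique p q r r' :
  is_meet_dbl C p q r -> is_meet_dbl C p q r' -> r = r'.
Proof.
case=> ri rp rq rmax [r'i r'p r'q r'max].
by apply: dle_anti; [apply: r'max | apply: rmax].
Qed.

Lemma downset_le x y : y <= x -> x \in downset C -> y \in downset C.
Proof.
move=> yx /[!inE] /existsP[z /andP[zC xz]]; apply/existsP; exists z.
by rewrite zC (le_trans yx xz).
Qed.

Lemma sub_downset : C \subset downset C.
Proof.
by apply/subsetP => x xC; rewrite inE; apply/existsP; exists x; rewrite xC lexx.
Qed.

Hypothesis convC : convex C.

Lemma convex_downset_ge x y : x \in C -> x <= y -> y \in downset C -> y \in C.
Proof.
by move=> xC xy /[!inE] /existsP[z /andP[zC yz]]; apply: convC xC zC xy yz.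
Qed.

Lemma in_dbl_top_ge x y : in_dbl C (x, true) -> x <= y -> in_dbl C (y, true).
Proof.
rewrite /in_dbl /= => /orP[xD|xC] xy; have [yD|//] := boolP (y \in downset C).
- by rewrite (downset_le xy yD) in xD.
- by rewrite (convex_downset_ge xC xy yD) orbT.
Qed.

(* The bit of a join must go up when the join leaves I(C); the bit of a meet
   can only stay up when the meet lies in the upper copy. *)
Definition dbl_join p q : L * bool :=
  (p.1 `|` q.1, [|| p.2, q.2 | p.1 `|` q.1 \notin downset C]).
Definition dbl_meet p q : L * bool :=
  (p.1 `&` q.1, [&& p.2, q.2 & in_dbl C (p.1 `&` q.1, true)]).

Lemma in_dbl_join p q : in_dbl C p -> in_dbl C q -> in_dbl C (dbl_join p q).
Proof.
case: p q => [x i] [y j]; case: i; case: j => xi yi; rewrite /dbl_join /=.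
- exact: in_dbl_top_ge xi (leUl x y).
- exact: in_dbl_top_ge xi (leUl x y).
- exact: in_dbl_top_ge yi (leUr y x).
- by rewrite /in_dbl /=; case: (boolP (_ \in _)).
Qed.

Lemma in_dbl_meet p q : in_dbl C p -> in_dbl C q -> in_dbl C (dbl_meet p q).
Proof.
case: p q => [x i] [y j]; case: i; case: j; rewrite /dbl_meet /in_dbl /= => xi yi.
- by case: ifP => // /negbT; rewrite negb_or negbK => /andP[].
- exact: downset_le (leIr y x) yi.
- exact: downset_le (leIl x y) xi.
- exact: downset_le (leIl x y) xi.
Qed.

Lemma dbl_joinP p q :
  in_dbl C p -> in_dbl C q -> is_join_dbl C p q (dbl_join p q).
Proof.
move=> pi qi; split; first exact: in_dbl_join.
- by rewrite /dle /= leUl; case: p.2.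
- by rewrite /dle /= leUr; case: q.2; rewrite ?orbT.
case=> w k wi /andP[/= xw ik] /andP[/= yw jk]; rewrite /dle /= leUx xw yw /=.
case: k wi ik jk => [_|wD]; rewrite ?implybT // !implybF.
move=> /negbTE-> /negbTE-> /=.
by rewrite negbK (downset_le _ wD) // leUx xw yw.
Qed.

Lemma dbl_meetP p q :
  in_dbl C p -> in_dbl C q -> is_meet_dbl C p q (dbl_meet p q).
Proof.
move=> pi qi; split; first exact: in_dbl_meet.
- by rewrite /dle /= leIl; apply/implyP => /andP[].
- by rewrite /dle /= leIr; apply/implyP => /and3P[].
case=> w k wi /andP[/= wx ki] /andP[/= wy kj]; rewrite /dle /= lexI wx wy /=.
case: k wi ki kj => //= wi -> -> /=; apply: in_dbl_top_ge wi _.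
by rewrite lexI wx wy.
Qed.

Lemma left_modular_dblE (a : L * bool) : in_dbl C a ->
  left_modular_dbl C a <->
  forall b c : L * bool, in_dbl C b -> in_dbl C c -> dlt b c ->
    dbl_meet (dbl_join b a) c = dbl_join b (dbl_meet a c).
Proof.
move=> ai; split=> lma b c bi ci bc.
  by apply: lma bc _ _ _ _ (dbl_joinP _ _) (dbl_meetP _ _) (dbl_meetP _ _)
    (dbl_joinP _ _); rewrite // (in_dbl_join, in_dbl_meet).
move=> u v w z /(is_join_dbl_unique (dbl_joinP bi ai))<-.
move=> /(is_meet_dbl_unique (dbl_meetP (in_dbl_join bi ai) ci))<-.
move=> /(is_meet_dbl_unique (dbl_meetP ai ci))<-.
by move=> /(is_join_dbl_unique (dbl_joinP bi (in_dbl_meet ai ci)))<-; apply: lma.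
Qed.

Definition dbl_lift (x : L) : L * bool := (x, x \notin downset C).

Lemma in_dbl_lift x : in_dbl C (dbl_lift x).
Proof. by rewrite /in_dbl /=; case: (boolP (x \in downset C)). Qed.

Lemma dlt_lift x y : x < y -> dlt (dbl_lift x) (dbl_lift y).
Proof.
move=> xy; rewrite /dlt /dle /= (ltW xy) xpair_eqE (lt_eqF xy) andbT /=.
by apply/implyP; apply: contra => yD; apply: downset_le (ltW xy) yD.
Qed.

Lemma left_modular_dbl_fst (a : L * bool) :
  in_dbl C a -> left_modular_dbl C a -> left_modular a.1.
Proof.
move=> ai /(left_modular_dblE ai) lma b c bc.
by have [] := lma _ _ (in_dbl_lift b) (in_dbl_lift c) (dlt_lift bc).
Qed.

Lemma dlt_bot_top m : dlt (m, false) (m, true).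
Proof. by rewrite /dlt /dle /= lexx xpair_eqE eqxx. Qed.

Lemma in_dbl_bot_top m : m \in C -> in_dbl C (m, false) /\ in_dbl C (m, true).
Proof. by move=> mC; rewrite /in_dbl /= mC orbT (subsetP sub_downset). Qed.

Lemma left_modular_dbl_bot_le_maximal a m : a \in downset C ->
  left_modular_dbl C (a, false) -> maximal_in C m -> a <= m.
Proof.
move=> aD /(left_modular_dblE (aD : in_dbl C (a, false))) lma [mC mmax].
have [mbot mtop] := in_dbl_bot_top mC.
have := lma _ _ mbot mtop (dlt_bot_top m).
rewrite /dbl_join /dbl_meet /= meetC joinKI meetKUC.
rewrite mtop (subsetP sub_downset m mC) andbT => -[/negbFE maD].
by rewrite -(mmax _ (convex_downset_ge mC (leUl m a) maD) (leUl m a)) leUr.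
Qed.

Lemma left_modular_dbl_bot a : a \in downset C -> left_modular a ->
  (forall m, maximal_in C m -> a <= m) -> left_modular_dbl C (a, false).
Proof.
move=> aD lma amax; apply/(left_modular_dblE (aD : in_dbl C (a, false))).
move=> [b i] [c j] bi ci /andP[/andP[/= bc ij] _].
rewrite /dbl_join /dbl_meet /= (left_modular_le lma bc); congr pair.
set x := b `|` (a `&` c).
have bx : b <= x := leUl _ _.
have xc : x <= c by rewrite leUx bc leIr.
case: i bi ij => [bi /= -> | bD _] /=; first by rewrite (in_dbl_top_ge bi bx).
have [xD|xnD] := boolP (x \in downset C); last first.
  have cnD : c \notin downset C by apply: contra xnD; apply: downset_le xc.
  move: ci; rewrite /in_dbl /= (negbTE cnD) xnD.
  case: j => // _; rewrite andbT; apply: contra xnD.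
  by apply: downset_le; rewrite leU2 ?leIl.
apply/and3P => -[baD _]; rewrite /in_dbl /= xD /= => xC.
have [m mmax xm] := exists_maximal_above xC.
have bam : b `|` a <= m by rewrite leUx (le_trans bx xm) amax.
by rewrite (downset_le bam (subsetP sub_downset m mmax.1)) in baD.
Qed.

Lemma left_modular_dbl_top_ge_minimal a m : in_dbl C (a, true) ->
  left_modular_dbl C (a, true) -> minimal_in C m -> m <= a.
Proof.
move=> ai /(left_modular_dblE ai) lma [mC mmin].
have [mbot mtop] := in_dbl_bot_top mC.
have := lma _ _ mbot mtop (dlt_bot_top m).
rewrite /dbl_join /dbl_meet /= meetC joinKI meetKUC.
have mD := subsetP sub_downset m mC.
have amD := downset_le (leIr m a) mD.
rewrite mtop mD /in_dbl /= amD orbF => -[/esym amC].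
by rewrite -(mmin _ amC (leIr m a)) leIl.
Qed.

Lemma left_modular_dbl_top a : in_dbl C (a, true) -> left_modular a ->
  (forall m, minimal_in C m -> m <= a) -> left_modular_dbl C (a, true).
Proof.
move=> ai lma amin; apply/(left_modular_dblE ai).
move=> [b i] [c j] bi ci /andP[/andP[/= bc ij] _].
rewrite /dbl_join /dbl_meet /= (left_modular_le lma bc); congr pair.
set x := b `|` (a `&` c).
have bx : b <= x := leUl _ _.
have xc : x <= c by rewrite leUx bc leIr.
rewrite orbT /=; case: j ci ij => [_ _ | cD] /=; last first.
  by case: i bi => //= _ _; rewrite (downset_le xc cD).
have acx : a `&` c <= x := leUr _ _.
apply/idP/idP => [xtop | /or3P[it|act|xnD]].
- have [xD|_] := boolP (x \in downset C); last by rewrite !orbT.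
  have xC : x \in C by move: xtop; rewrite /in_dbl /= xD.
  have [m mmin mx] := exists_minimal_below xC.
  have mac : m <= a `&` c by rewrite lexI amin // (le_trans mx xc).
  by rewrite /in_dbl /= (convex_downset_ge mmin.1 mac (downset_le acx xD)) !orbT.
- by move: bi; rewrite it => /in_dbl_top_ge; apply.
- exact: (in_dbl_top_ge act acx).
- by rewrite /in_dbl /= xnD.
Qed.

Lemma left_modular_dbl_bot_iff a : a \in downset C ->
  left_modular_dbl C (a, false) <->
  left_modular a /\ forall m, maximal_in C m -> a <= m.
Proof.
move=> aD; split=> [lma | [lma amax]]; last exact: left_modular_dbl_bot.
split; first exact: left_modular_dbl_fst (aD : in_dbl C (a, false)) lma.
by move=> m; apply: left_modular_dbl_bot_le_maximal.
Qed.

Lemma left_modular_dbl_top_iff a : in_dbl C (a, true) ->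
  left_modular_dbl C (a, true) <->
  left_modular a /\ forall m, minimal_in C m -> m <= a.
Proof.
move=> ai; split=> [lma | [lma amin]]; last exact: left_modular_dbl_top.
split; first exact: left_modular_dbl_fst ai lma.
by move=> m; apply: left_modular_dbl_top_ge_minimal.
Qed.

End Doubling.

Theorem proposition3p16 (disp : Order.disp_t) (L : finLatticeType disp)
  (C : {set L}) (hconv : convex C) (hne : C != set0) :
  (forall a : L, a \in downset C ->
     (left_modular_dbl C (a, false) <->
      left_modular a /\ forall m, maximal_in C m -> a <= m)) /\
  (forall a : L, (a \notin downset C) || (a \in C) ->
     (left_modular_dbl C (a, true) <->
      left_modular a /\ forall m, minimal_in C m -> m <= a)) /\
  (forall a : L, a \in C ->
     (left_modular_dbl C (a, false) /\ left_modular_dbl C (a, true) <->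
      left_modular a /\ heart C a)).
Proof.
split; first exact: left_modular_dbl_bot_iff.
split; first exact: left_modular_dbl_top_iff.
move=> a aC; have [aD atop] := in_dbl_bot_top aC.
have botP := left_modular_dbl_bot_iff hconv (aD : a \in downset C).
have topP := left_modular_dbl_top_iff hconv atop.
split=> [[/botP[lma amax] /topP[_ amin]] | [lma [_ [amax amin]]]].
- by split; [|split].
- by split; [apply/botP | apply/topP].
Qed.
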